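(* For $t\ge0$ let $C_t:=\binom{2t}{t}2^t$ and for $t\ge1$ let $D_t:=\sum_{j=0}^{t-1}U(3t,j)-\sum_{j\ge t+1}U(3t,j)$. Then $\displaystyle\lim_{t\to\infty}\frac{D_t}{C_t}=\frac19$.
   Context: For integers $m,j$, $U(m,j):=\binom{m-j}{j}2^j$ if $0\le j$ and $2j\le m$, and $U(m,j):=0$ otherwise. *)

From HB Require Import structures.
From mathcomp Require Import all_boot all_order all_algebra.
From mathcomp Require Import all_classical all_reals all_analysis.
Set Implicit Arguments. Unset Strict Implicit. Unset Printing Implicit Defensive.
Import Order.TTheory GRing.Theory Num.Theory.

Definition U (m j : nat) : nat := if (2 * j <= m)%N then ('C(m - j, j) * 2 ^ j)%N else 0%N.

Definition Cseq (t : nat) : nat := ('C(2 * t, t) * 2 ^ t)%N.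

(* D_t = sum_{j=0}^{t-1} U(3t,j) - sum_{j >= t+1} U(3t,j).
   U(3t,j) = 0 for j > 3t, so the second (infinite) sum is the finite sum over t+1 <= j <= 3t. *)
Definition Dseq (t : nat) : int :=
  ((\sum_(0 <= j < t) U (3 * t) j)%N)%:Z - ((\sum_(t.+1 <= j < (3 * t).+1) U (3 * t) j)%N)%:Z.

(* U(m,j) = C(m-j,j) 2^j satisfies the Pascal-type rule U(m+2,j+1) = U(m+1,j+1) + 2 U(m,j),
   and so do the partial sums S(m,k) = sum_{j<k} U(m,j).  Hence the full sums T(m) satisfy
   T(m+1) + T(m) = 2^(m+1), and by induction S(3t+1,t+1) + S(3t,t) = 8^t.  Since
   D_t = 2 S(3t,t) + C_t - T(3t), these give D_(t+1) + D_t = C_t, while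
   (t+1) C_(t+1) = 4(2t+1) C_t.  So r_t = D_t/C_t satisfies 4(2t+1) r_(t+1) = (t+1)(1 - r_t);
   for e_t = r_t - 1/9 this reads 4(2t+1) e_(t+1) = 4/9 - (t+1) e_t, which keeps
   (t+1)|e_t| <= 1 by induction. *)
From mathcomp Require Import all_boot all_order all_algebra.
From mathcomp Require Import all_classical all_reals all_analysis.
From mathcomp Require Import zify ring lra.
Import Order.TTheory GRing.Theory Num.Theory.
Import numFieldNormedType.Exports.

Lemma U_binom m j : U m j = 'C(m - j, j) * 2 ^ j.
Proof. by rewrite /U; case: leqP => // lt_m_2j; rewrite bin_small ?mul0n //; lia. Qed.

Lemma U_eq0 m j : m < 2 * j -> U m j = 0.
Proof. by rewrite /U ltnNge => /negbTE ->. Qed.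

Lemma Um0 m : U m 0 = 1.
Proof. by rewrite U_binom bin0. Qed.

Lemma USS m j : U m.+2 j.+1 = U m.+1 j.+1 + 2 * U m j.
Proof.
rewrite !U_binom !subSS; case: (leqP j m) => le_jm.
  by rewrite subSn // binS expnS; nia.
have -> : m - j = 0 by lia.
have -> : m.+1 - j = 0 by lia.
by rewrite !bin0n; case: j le_jm.
Qed.

Definition Usum m k := \sum_(0 <= j < k) U m j.

Lemma UsumS m k : Usum m k.+1 = Usum m k + U m k.
Proof. exact: big_nat_recr. Qed.

Lemma UsumSS m k : Usum m.+2 k.+1 = Usum m.+1 k.+1 + 2 * Usum m k.
Proof.
rewrite /Usum !big_nat_recl // !Um0.
under eq_bigr do rewrite USS.
by rewrite big_split -big_distrr /=; lia.
Qed.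

Definition Utotal m := Usum m m.+1.

Lemma Usum_total m k : m < k -> Usum m k = Utotal m.
Proof.
move=> /subnKC <-; elim: (k - m.+1) => [|n IHn]; first by rewrite addn0.
by rewrite addnS UsumS IHn U_eq0 ?addn0 //; lia.
Qed.

Lemma UtotalSS m : Utotal m.+2 = Utotal m.+1 + 2 * Utotal m.
Proof. by rewrite {1}/Utotal UsumSS !Usum_total. Qed.

Lemma UtotalS_add m : Utotal m.+1 + Utotal m = 2 ^ m.+1.
Proof.
elim: m => [|m IHm]; first by rewrite /Utotal /Usum !big_nat_recr //= !big_geq.
by rewrite UtotalSS expnS -IHm; lia.
Qed.

Lemma U_central t : U (3 * t).+2 t.+1 = 2 * U (3 * t).+1 t.
Proof.
rewrite !U_binom subSS expnS.
have -> : (3 * t).+1 - t = (2 * t).+1 by lia.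
rewrite -[in LHS](@bin_sub (2 * t).+1 t.+1); last lia.
have -> : (2 * t).+1 - t.+1 = t by lia.
by rewrite mulnCA.
Qed.

Lemma Usum_central t : Usum (3 * t).+1 t.+1 + Usum (3 * t) t = 8 ^ t.
Proof.
elim: t => [|t IHt]; first by rewrite /Usum !big_nat1 big_geq // Um0.
have -> : 3 * t.+1 = (3 * t).+3 by lia.
have := UsumSS (3 * t).+2 t.+1; have := UsumSS (3 * t).+1 t.+1.
have := UsumSS (3 * t).+1 t; have := UsumSS (3 * t) t.
have := UsumS (3 * t).+2 t.+1; have := UsumS (3 * t).+1 t.
have := U_central t.
by rewrite expnS -IHt; lia.
Qed.

Lemma Cseq_U t : Cseq t = U (3 * t) t.
Proof. by rewrite U_binom /Cseq; have -> : 3 * t - t = 2 * t by lia. Qed.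

Lemma Cseq_gt0 t : 0 < Cseq t.
Proof. by rewrite /Cseq muln_gt0 bin_gt0 expn_gt0 leq_pmull. Qed.

Lemma bin_central_succ n : n.+1 * 'C(n.*2.+2, n.+1) = 2 * n.*2.+1 * 'C(n.*2, n).
Proof.
have sym : 'C(n.*2.+1, n.+1) = 'C(n.*2.+1, n).
  rewrite -[in RHS]bin_sub; last lia.
  by congr 'C(_, _); lia.
have := mul_bin_diag n.*2.+2 n; have := mul_bin_diag n.*2.+1 n; rewrite /= sym => e1 e2.
apply/eqP; rewrite -(eqn_pmul2l (ltn0Sn n)) -e2; apply/eqP; nia.
Qed.

Lemma CseqS t : t.+1 * Cseq t.+1 = 4 * (2 * t).+1 * Cseq t.
Proof.
rewrite /Cseq !mul2n doubleS expnS mulnA bin_central_succ; nia.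
Qed.

Lemma Utotal_add3 m : Utotal m.+3 + Utotal m = 6 * 2 ^ m.
Proof.
have := UtotalS_add m.+2; have := UtotalS_add m.+1; have := UtotalS_add m.
by rewrite !expnS; lia.
Qed.

Lemma Usum_central_shift t :
  2 * (Usum (3 * t).+3 t.+1 + Usum (3 * t) t) + U (3 * t).+3 t.+1 = 6 * 8 ^ t.
Proof.
rewrite -Usum_central UsumSS UsumSS USS U_central [Usum (3 * t).+1 t.+1]UsumS; lia.
Qed.

Lemma Dseq_Usum t :
  Dseq t = (Posz (2 * Usum (3 * t) t + U (3 * t) t) - Posz (Utotal (3 * t)))%R.
Proof.
have split : Utotal (3 * t) =
    Usum (3 * t) t + U (3 * t) t + \sum_(t.+1 <= j < (3 * t).+1) U (3 * t) j.
  by rewrite /Utotal /Usum (@big_cat_nat _ _ _ t.+1) ?(@big_nat_recr _ _ _ t 0) //=; lia.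
by rewrite /Dseq -/(Usum (3 * t) t) split; lia.
Qed.

Lemma Dseq0 : Dseq 0 = 0%R.
Proof. by rewrite /Dseq !big_geq. Qed.

Lemma DseqS_add t : (Dseq t.+1 + Dseq t)%R = Cseq t.
Proof.
have := Usum_central_shift t; have := Utotal_add3 (3 * t).
rewrite !Dseq_Usum Cseq_U (_ : 2 ^ (3 * t) = 8 ^ t) ?expnM //.
by rewrite (_ : 3 * t.+1 = (3 * t).+3); lia.
Qed.

Local Open Scope classical_set_scope.
Local Open Scope ring_scope.

Lemma ratio_error_step (R : realFieldType) t (r r' : R) :
  `|t.+1%:R * (r - 9^-1)| <= 1 -> 4 * (2 * t%:R + 1) * r' = t.+1%:R * (1 - r) ->
  `|t.+2%:R * (r' - 9^-1)| <= 1.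
Proof.
have -> : t.+1%:R = t%:R + 1 :> R by rewrite -addn1 natrD.
have -> : t.+2%:R = t%:R + 2 :> R by rewrite -addn2 natrD.
have x_ge0 : 0 <= t%:R :> R by [].
set x := t%:R in x_ge0 *; rewrite ler_norml; set w := (x + 1) * (r - 9^-1).
move=> /andP[w_ge w_le] rec.
have pos : 0 < 4 * (2 * x + 1) by lra.
have scaled : 4 * (2 * x + 1) * ((x + 2) * (r' - 9^-1)) = (x + 2) * (4 / 9 - w).
  by rewrite mulrCA mulrBr rec /w; field.
have lo : 0 <= (x + 2) * (1 + w) by apply: mulr_ge0; lra.
have hi : 0 <= (x + 2) * (1 - w) by apply: mulr_ge0; lra.
by rewrite ler_norml; apply/andP; split; rewrite -(ler_pM2l pos) scaled; lra.
Qed.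

Lemma recurrence_cvg_ninth (R : realType) (r : R^nat) :
  `|r 0%N - 9^-1| <= 1 -> (forall t, 4 * (2 * t%:R + 1) * r t.+1 = t.+1%:R * (1 - r t)) ->
  r @ \oo --> (9^-1 : R).
Proof.
move=> r0 rec.
(* [harmonic t] is the single term [t.+1%:R^-1], not a partial harmonic sum. *)
have dist_le t : `|r t - 9^-1| <= harmonic t.
  rewrite /= -[X in _ <= X]mulr1 ler_pdivlMl ?ltr0n // -[X in X * _]ger0_norm // -normrM.
  by elim: t => [|t IHt]; [rewrite mul1r | exact: ratio_error_step IHt (rec t)].
apply: (@squeeze_cvgr _ _ _ _ (fun t => 9^-1 - harmonic t) (fun t => 9^-1 + harmonic t)).
- by apply: nearW => t; rewrite -ler_distl; exact: dist_le.
- by rewrite -[X in _ --> X](subr0 9^-1); apply: cvgB; [exact: cvg_cst | exact: cvg_harmonic].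
- by rewrite -[X in _ --> X](addr0 9^-1); apply: cvgD; [exact: cvg_cst | exact: cvg_harmonic].
Qed.

Lemma Dseq_ratioS (R : numFieldType) t :
  4 * (2 * t%:R + 1) * ((Dseq t.+1)%:~R / (Cseq t.+1)%:R)
  = t.+1%:R * (1 - (Dseq t)%:~R / (Cseq t)%:R) :> R.
Proof.
have C_neq0 n : (Cseq n)%:R != 0 :> R by rewrite pnatr_eq0 -lt0n Cseq_gt0.
have D_S : (Dseq t.+1)%:~R = (Cseq t)%:R - (Dseq t)%:~R :> R.
  by rewrite -[(Cseq t)%:R]/((Posz (Cseq t))%:~R) -DseqS_add intrD addrK.
have C_S : 4 * (2 * t%:R + 1) = t.+1%:R * (Cseq t.+1)%:R / (Cseq t)%:R :> R.
  by rewrite -[t.+1%:R * _]natrM CseqS natrM mulfK ?C_neq0 // natrM -[(2 * t).+1]addn1 natrD natrM.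
by rewrite C_S D_S; field; rewrite !C_neq0.
Qed.

Theorem mainTheorem15 (R : realType) :
  (fun t : nat => (Dseq t)%:~R / (Cseq t)%:R : R) @ \oo --> ((9%:R)^-1 : R).
Proof.
apply: recurrence_cvg_ninth => [|t]; last exact: Dseq_ratioS.
by rewrite Dseq0 mul0r sub0r normrN ger0_norm ?invr_ge0 // invf_le1 // ler1n.
Qed.
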